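(* Let $U$ be a unicyclic graph of order $n\ge 3$ and let $X\in\mathbb R^{V(U)}$ be a vector all of whose entries are non-negative, or all of whose entries are non-positive. Label the vertices $v_1,\dots,v_n$ of $U$ so that $|X_{v_1}|\ge |X_{v_2}|\ge\cdots\ge |X_{v_n}|$, and write $X_i=X_{v_i}$. Then $$\sum_{uv\in E(U)}X_uX_v\ \le\ \sum_{i=2}^n X_1X_i+X_2X_3,$$ where the right-hand side equals $\sum_{uv\in E(S)}X_uX_v$ for the copy $S$ of $S_n^3$ on the same vertex set in which $v_1$ is adjacent to all other vertices and $v_2v_3$ is the additional edge. If moreover all entries of $X$ are positive (or all are negative) and $|X_1|>|X_2|$, then equality holds only if $U$ is isomorphic to $S_n^3$, with $v_1$ being its vertex of degree $n-1$.
   Context: A unicyclic graph is a connected graph containing exactly one cycle. $S_n^3$ denotes the graph of order $n$ obtained from the star $K_{1,n-1}$ by adding one edge between two of its pendant (degree-one) vertices. *)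

From HB Require Import structures.
From mathcomp Require Import all_boot all_order all_algebra.
Set Implicit Arguments. Unset Strict Implicit. Unset Printing Implicit Defensive.
Import Order.TTheory GRing.Theory Num.Theory.

Definition simple_graph (T : finType) (e : rel T) : Prop :=
  symmetric e /\ irreflexive e.

Definition edges (T : finType) (e : rel T) : {set {set T}} :=
  [set [set p.1; p.2] | p : T * T & e p.1 p.2].

Definition is_graph_cycle (T : finType) (e : rel T) (c : seq T) : bool :=
  [&& uniq c, 2 < size c & path.cycle e c].

(* The edge set of the cycle c (cycles are identified by their edge set,
   so rotations/reversals of c give the same cycle). *)
Definition cycle_edges (T : finType) (c : seq T) : {set {set T}} :=
  [set [set p.1; p.2] | p in zip c (rot 1 c)].

Definition connected_graph (T : finType) (e : rel T) : Prop :=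
  forall x y : T, connect e x y.

Definition unicyclic (T : finType) (e : rel T) : Prop :=
  connected_graph e /\
  exists C : {set {set T}},
    (exists c, is_graph_cycle e c /\ cycle_edges c = C) /\
    (forall c, is_graph_cycle e c -> cycle_edges c = C).

Definition edge_sum (T : finType) (R : comNzRingType) (e : rel T) (X : T -> R) : R :=
  (\sum_(E in edges e) \prod_(x in E) X x)%R.

Definition Sn3 (n : nat) : rel 'I_n :=
  fun i j => (i != j) &&
    [|| (nat_of_ord i == 0), (nat_of_ord j == 0) |
        ((nat_of_ord i == 1) && (nat_of_ord j == 2)) ||
        ((nat_of_ord i == 2) && (nat_of_ord j == 1))].

Definition iso_Sn3_centered (T : finType) (e : rel T) (v : T) : Prop :=
  exists f : T -> 'I_#|T|,
    bijective f /\ (forall x y, e x y = Sn3 (f x) (f y)) /\ nat_of_ord (f v) = 0.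

From HB Require Import structures.
From mathcomp Require Import all_boot all_order all_algebra all_fingroup.
From mathcomp Require Import lra zify.
Import Order.TTheory GRing.Theory Num.Theory.
Set Implicit Arguments. Unset Strict Implicit. Unset Printing Implicit Defensive.

(* Since X u * X v = |X u| * |X v|, we work with the weights a = |X| >= 0.
   The unique cycle of U has an edge xy avoiding v1; deleting it leaves a
   forest F.  The core fact is the forest bound: in a forest, the total edge
   weight sum a u * a v inside S is at most a r * (weight of S - r) whenever
   r is a heaviest vertex; it is proved by removing leaves l != r, each lying
   on at most one edge, of weight <= a l * a r.  For positive weights and a
   unique heaviest r, equality forces F to be the star centred at r.  Adding
   back xy, of weight a x * a y <= a v2 * a v3, gives the bound, and in the
   equality case U is the star at v1 plus the edge xy, i.e. S_n^3. *)

Definition same_pair (T : eqType) (x y u v : T) : bool :=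
  ((u == x) && (v == y)) || ((u == y) && (v == x)).

Lemma same_pairC (T : eqType) (x y u v : T) :
  same_pair x y v u = same_pair x y u v.
Proof. by rewrite /same_pair orbC [(v == y) && _]andbC [(v == x) && _]andbC. Qed.

Lemma set2_same_pair (T : finType) (x y u v : T) :
  u != v -> [set u; v] = [set x; y] -> same_pair x y u v.
Proof.
move=> huv E.
have := set21 u v; have := set22 u v; rewrite E !in_set2.
case/orP=> /eqP hv; case/orP=> /eqP hu; subst; rewrite /same_pair ?eqxx ?orbT //.
all: by rewrite eqxx in huv.
Qed.

Lemma path_zip_rel (T : eqType) (e : rel T) x s :
  path e x s -> forall p, p \in zip (belast x s) s -> e p.1 p.2.
Proof.
elim: s x => [|y s IH] x //= /andP[hxy hp] p.
by rewrite inE => /predU1P[-> // | /IH]; apply.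
Qed.

Lemma cycle_zip_rel (T : eqType) (e : rel T) c :
  path.cycle e c -> forall p, p \in zip c (rot 1 c) -> e p.1 p.2.
Proof.
case: c => [|z s] //= hc p; rewrite rot1_cons -{1}(belast_rcons z s z).
exact: path_zip_rel hc p.
Qed.

Definition acyclic (T : finType) (H : rel T) : Prop :=
  forall c, ~~ is_graph_cycle H c.

Definition leaf_of (T : finType) (H : rel T) (S : {set T}) (l : T) : Prop :=
  forall v v', v \in S -> v' \in S -> H l v -> H l v' -> v = v'.

Section Forests.
Variables (T : finType) (H : rel T).
Hypotheses (H_sym : symmetric H) (H_irr : irreflexive H) (H_acyclic : acyclic H).

(* In an acyclic graph the first vertex z of a simple path z, y, p is
   adjacent to no vertex of p: such an edge would close a cycle. *)
Lemma acyclic_no_chord z y p v :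
  uniq (z :: y :: p) -> path H z (y :: p) -> v \in p -> ~~ H z v.
Proof.
move=> hu hp hv; apply/negP => hzv.
have hi : (index v p < size p)%N by rewrite index_mem.
have hlast : last y (take (index v p).+1 p) = v.
  by rewrite (last_nth v) size_takel //= nth_take // nth_index.
have := H_acyclic (z :: y :: take (index v p).+1 p); apply/negP/negPn/and3P; split.
- exact: (take_uniq (index v p).+3 hu).
- by rewrite /= size_takel.
- rewrite /path.cycle -cats1 cat_path /= hlast (H_sym v) hzv andbT.
  move: hp; rewrite -{1}(cat_take_drop (index v p).+1 p) -cat_cons cat_path.
  by rewrite andbT => /andP[].
Qed.

Lemma maximal_path (S : {set T}) z p :
  uniq (z :: p) -> {subset z :: p <= S} -> path H z p ->
  exists z' p', [/\ uniq (z' :: p'), {subset z' :: p' <= S}, path H z' p',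
    last z' p' = last z p & (size p <= size p')%N /\
    forall v, v \in S -> H z' v -> v \in z' :: p'].
Proof.
move=> hu hs hp.
have [k hk] : exists k, (#|S| - size (z :: p) <= k)%N by exists (#|S| - size (z :: p))%N.
elim: k z p hk hu hs hp => [|k IH] z p hk hu hs hp;
  (case: (pickP [pred v | [&& v \in S, H z v & v \notin z :: p]])
    => [v /and3P[hvS hzv hvn] | hnone];
   last by exists z, p; split=> //; split=> // v hvS hzv; apply/negPn/negP => hvn;
     have := hnone v; rewrite /= hvS hzv hvn).
all: have uniq_v : uniq (v :: z :: p) by rewrite cons_uniq hvn.
all: have sub_v : {subset v :: z :: p <= S}
       by move=> w; rewrite inE => /predU1P[-> | /hs].
- have : (size (v :: z :: p) <= #|S|)%N.
    by rewrite cardE; apply: uniq_leq_size => // w; rewrite mem_enum; apply: sub_v.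
  by move: hk => /=; lia.
- have hk' : (#|S| - size (v :: z :: p) <= k)%N by move: hk => /=; lia.
  have path_v : path H v (z :: p) by rewrite /= H_sym hzv hp.
  have [z' [p' [? ? ? hl' [hsz hmax]]]] := IH v (z :: p) hk' uniq_v sub_v path_v.
  by exists z', p'; split=> //; split=> //; move: hsz => /=; lia.
Qed.

Lemma maximal_path_leaf (S : {set T}) z p :
  uniq (z :: p) -> path H z p ->
  (forall v, v \in S -> H z v -> v \in z :: p) -> leaf_of H S z.
Proof.
move=> hu hp hmax.
suff next : forall v, v \in S -> H z v -> v = head z p.
  by move=> v v' hv hv' hzv hzv'; rewrite (next v) // (next v').
move=> v hvS hzv; move: (hmax v hvS hzv); rewrite inE => /predU1P[E | hv].
  by rewrite E H_irr in hzv.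
case: p hu hp hv {hmax} => [|y p] //= hu hp; rewrite inE => /predU1P[// | hv].
by rewrite (negbTE (acyclic_no_chord hu hp hv)) in hzv.
Qed.

Lemma forest_leaf (S : {set T}) (r w : T) :
  w \in S -> w != r -> exists2 l, (l \in S) && (l != r) & leaf_of H S l.
Proof.
move=> hwS hwr.
suff [z [p [hu hs hp hmax hzr]]] : exists z p,
    [/\ uniq (z :: p), {subset z :: p <= S}, path H z p,
        forall v, v \in S -> H z v -> v \in z :: p & z != r].
  by exists z; [rewrite hzr hs ?mem_head | exact: maximal_path_leaf hmax].
case: (pickP [pred u | [&& r \in S, u \in S & H u r]]) => [u /and3P[hrS huS hur] | hnone].
- (* extend the path u, r: its last vertex stays r, hence its head is not r *)
  have hur' : u != r by apply: contraTneq hur => ->; rewrite H_irr.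
  have uniq_ur : uniq [:: u; r] by rewrite /= inE hur'.
  have sub_ur : {subset [:: u; r] <= S} by move=> x; rewrite !inE => /predU1P[-> | /eqP ->].
  have path_ur : path H u [:: r] by rewrite /= hur.
  have [z [p [hu hs hp hl [hsz hmax]]]] := maximal_path uniq_ur sub_ur path_ur.
  exists z, p; split=> //; case: p hu hl hsz {hs hp hmax} => [|y p] //= hu hl _.
  move: hu => /andP[hz _]; apply: contraNneq hz => ->; rewrite -hl; exact: mem_last.
- (* otherwise r has no neighbour in S, so a path from w cannot end at r *)
  have sub_w : {subset [:: w] <= S} by move=> x; rewrite inE => /eqP ->.
  have [z [p [hu hs hp hl [_ hmax]]]] := maximal_path (erefl : uniq [:: w]) sub_w erefl.
  exists z, p; split=> //; apply/eqP => E; subst z.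
  case: p hu hs hp hl {hmax} => [|y p] /= hu hs hp hl; first by rewrite hl eqxx in hwr.
  have := hnone y; rewrite /= !hs ?mem_head ?inE ?eqxx ?orbT //= H_sym.
  by case/andP: hp => ->.
Qed.

Lemma forest_ind (r : T) (P : {set T} -> Prop) :
  (forall S : {set T}, (forall w, w \in S -> w = r) -> P S) ->
  (forall (S : {set T}) l, l \in S -> l != r -> leaf_of H S l -> P (S :\ l) -> P S) ->
  forall S : {set T}, P S.
Proof.
move=> hbase hstep S; have [n] := ubnP #|S|.
elim: n S => [|n IH] S; rewrite ?ltn0 // ltnS => hn.
case: (pickP [pred w | (w \in S) && (w != r)]) => [w /andP[hwS hwr] | hnone].
- have [l /andP[hlS hlr] hleaf] := forest_leaf hwS hwr.
  apply: hstep hleaf (IH _ _) => //.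
  by move: hn; rewrite (cardsD1 l S) hlS.
- apply: hbase => w hw; apply/eqP/negPn; move: (hnone w); rewrite /= hw.
  by move/negbT.
Qed.

End Forests.

Local Open Scope ring_scope.

(* adj_sum H a S: the sum of a u * a v over the ordered H-adjacent pairs
   (u, v) of S, that is twice the weight of the edges of H inside S. *)
Definition adj_sum (R : comNzRingType) (T : finType) (H : rel T) (a : T -> R)
    (S : {set T}) : R :=
  \sum_(u in S) \sum_(v in S) (if H u v then a u * a v else 0).

Definition row_sum (R : comNzRingType) (T : finType) (H : rel T) (a : T -> R)
    (S : {set T}) (l : T) : R :=
  \sum_(v in S) (if H l v then a l * a v else 0).

(* rest_sum a r S: the weight of S without r; a r * rest_sum a r S is the
   weight of the star centred at r spanning S. *)
Definition rest_sum (R : comNzRingType) (T : finType) (a : T -> R) (r : T)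
    (S : {set T}) : R :=
  \sum_(w in S | w != r) a w.

Definition star_on (T : finType) (H : rel T) (r : T) (S : {set T}) : Prop :=
  (forall w, w \in S -> w != r -> H w r) /\
  (forall u v, u \in S -> v \in S -> H u v -> (u == r) || (v == r)).

Section WeightedSums.
Variables (R : comNzRingType) (T : finType) (H : rel T) (a : T -> R).

(* Removing a vertex l from S removes its row, counted once for each orientation. *)
Lemma adj_sum_remove (S : {set T}) l : symmetric H -> irreflexive H -> l \in S ->
  adj_sum H a S = adj_sum H a (S :\ l) + row_sum H a S l *+ 2.
Proof.
move=> hsym hirr hl.
set F := fun u v => if H u v then a u * a v else 0.
have col : \sum_(u in S | u != l) F u l = row_sum H a S l.
  rewrite /row_sum (bigD1 l hl) /= /F hirr add0r.
  by apply: eq_bigr => u _; rewrite hsym mulrC.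
have rest : \sum_(u in S :\ l) \sum_(v in S :\ l) F u v =
    \sum_(u in S | u != l) \sum_(v in S | v != l) F u v.
  apply: eq_big => [u|u _]; first by rewrite in_setD1 andbC.
  by apply: eq_bigl => v; rewrite in_setD1 andbC.
have split_col : \sum_(u in S | u != l) \sum_(v in S) F u v =
    row_sum H a S l + \sum_(u in S | u != l) \sum_(v in S | v != l) F u v.
  by rewrite -col -big_split; apply: eq_bigr => u _; rewrite (bigD1 l hl).
by rewrite /adj_sum -/F (bigD1 l hl) /= split_col rest mulr2n [RHS]addrC addrA.
Qed.

Lemma rest_sum_remove r (S : {set T}) l : l \in S -> l != r ->
  rest_sum a r S = a l + rest_sum a r (S :\ l).
Proof.
move=> hl hlr; rewrite /rest_sum (bigD1 l) /=; last by rewrite hl.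
by congr (_ + _); apply: eq_bigl => w; rewrite in_setD1; case: (w != l); rewrite ?andbT ?andbF.
Qed.

Lemma leaf_row_sum (S : {set T}) l : leaf_of H S l ->
  row_sum H a S l = 0 \/
  exists2 u, (u \in S) && H l u & row_sum H a S l = a l * a u.
Proof.
move=> hleaf.
case: (pickP [pred u | (u \in S) && H l u]) => [u /= /andP[huS hlu] | hnone].
- right; exists u; first by rewrite huS hlu.
  rewrite /row_sum (bigD1 u huS) /= hlu big1 ?addr0 // => v /andP[hv hvu].
  by case: ifP => // hlv; rewrite (hleaf v u) ?eqxx in hvu.
- left; apply: big1 => v hv; case: ifP => // hlv.
  by move: (hnone v); rewrite /= hv hlv.
Qed.

Lemma adj_sum_setT : adj_sum H a setT = \sum_u \sum_v (if H u v then a u * a v else 0).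
Proof. by apply: eq_big => [u|u _]; [rewrite in_setT | apply: eq_bigl => v; rewrite in_setT]. Qed.

Lemma sums_on_root r (S : {set T}) : irreflexive H ->
  (forall w, w \in S -> w = r) -> adj_sum H a S = 0 /\ rest_sum a r S = 0.
Proof.
move=> hirr hS; split.
  by apply: big1 => u hu; apply: big1 => v hv; rewrite (hS u) // (hS v) // hirr.
by apply: big1 => w /andP[hw]; rewrite (hS w hw) eqxx.
Qed.

End WeightedSums.

Lemma star_on_add_leaf (T : finType) (H : rel T) (r l : T) (S : {set T}) :
  symmetric H -> star_on H r (S :\ l) -> leaf_of H S l -> r \in S -> H l r ->
  star_on H r S.
Proof.
move=> hsym [hcentre hedges] hleaf hr hlr; split.
- move=> w hw hwr; case: (eqVneq w l) => [-> // | hwl].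
  by apply: hcentre => //; rewrite in_setD1 hwl.
- move=> u v hu hv huv.
  case: (eqVneq u l) => [E | hul]; first by subst u; rewrite (hleaf v r) ?eqxx ?orbT.
  case: (eqVneq v l) => [E | hvl].
    by subst v; rewrite hsym in huv; rewrite (hleaf u r) ?eqxx.
  by apply: hedges => //; rewrite in_setD1 ?hul ?hvl.
Qed.

Section ForestBound.
Variables (R : realDomainType) (T : finType) (H : rel T) (a : T -> R) (r : T).
Hypotheses (H_sym : symmetric H) (H_irr : irreflexive H) (H_acyclic : acyclic H).
Hypotheses (a_ge0 : forall w, 0 <= a w) (a_le_r : forall w, a w <= a r).

Lemma leaf_row_le (S : {set T}) l : leaf_of H S l -> row_sum H a S l <= a l * a r.
Proof.
case/(leaf_row_sum a) => [-> | [u _ ->]]; last by rewrite ler_wpM2l.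
by rewrite mulr_ge0.
Qed.

(* The forest bound: the weight of the edges of an acyclic H inside S is at
   most a r times the weight of S without r.  Each leaf l != r sits on at most
   one edge, of weight at most a l * a r. *)
Lemma forest_bound (S : {set T}) : adj_sum H a S <= (a r * rest_sum a r S) *+ 2.
Proof.
elim/(@forest_ind _ _ H_sym H_irr H_acyclic r): S => [S hS | S l hl hlr hleaf IH].
  by have [-> ->] := sums_on_root a H_irr hS; rewrite mulr0 mul0rn.
rewrite (adj_sum_remove a H_sym H_irr hl) (rest_sum_remove a hl hlr).
have := leaf_row_le hleaf; move: IH; rewrite !mulr2n; lra.
Qed.

Lemma forest_bound_eq (S : {set T}) :
  (forall w, 0 < a w) -> (forall w, w != r -> a w < a r) ->
  adj_sum H a S = (a r * rest_sum a r S) *+ 2 -> star_on H r S.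
Proof.
move=> a_gt0 a_lt_r.
elim/(@forest_ind _ _ H_sym H_irr H_acyclic r): S => [S hS _ | S l hl hlr hleaf IH heq].
  by split=> [w /hS -> | u v /hS ->]; rewrite ?eqxx.
move: heq; rewrite (adj_sum_remove a H_sym H_irr hl) (rest_sum_remove a hl hlr) => heq.
have hsub := forest_bound (S :\ l); have hrow := leaf_row_le hleaf.
have hrow_eq : row_sum H a S l = a l * a r by move: heq hsub hrow; rewrite !mulr2n; lra.
have hstar : star_on H r (S :\ l) by apply: IH; move: heq hsub hrow; rewrite !mulr2n; lra.
case: (leaf_row_sum a hleaf) => [h0 | [u /andP[hu hlu] hrow_u]].
  by have := mulr_gt0 (a_gt0 l) (a_gt0 r); rewrite -hrow_eq h0 ltxx.
have hur : u = r.
  have ha : a u = a r by apply: (mulfI (lt0r_neq0 (a_gt0 l))); rewrite -hrow_u hrow_eq.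
  by case: (eqVneq u r) => // /a_lt_r; rewrite ha ltxx.
by subst u; exact: star_on_add_leaf hleaf hu hlu.
Qed.

End ForestBound.

(* Deleting an edge xy that lies on every cycle of e leaves an acyclic graph:
   a cycle of the remaining graph is a cycle of e, hence would contain xy. *)
Lemma acyclic_delete_edge (T : finType) (e : rel T) (C : {set {set T}}) x y :
  irreflexive e -> (forall c, is_graph_cycle e c -> cycle_edges c = C) ->
  [set x; y] \in C -> acyclic (fun u v => e u v && ~~ same_pair x y u v).
Proof.
move=> hirr huni hxyC c; apply/negP => hc.
have hce : is_graph_cycle e c.
  case/and3P: hc => h1 h2 h3; apply/and3P; split => //.
  by apply: sub_cycle h3 => u v /andP[].
move: hxyC; rewrite -(huni c hce) => /imsetP[p hp Ep].
case/and3P: hc => _ _ /cycle_zip_rel /(_ p hp) /andP[hep].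
have hp12 : p.1 != p.2 by apply: contraTneq hep => ->; rewrite hirr.
by rewrite (set2_same_pair hp12 (esym Ep)).
Qed.

(* In a unicyclic graph some edge xy of the cycle avoids any given vertex v1
   (a cycle has at least three vertices), and deleting it leaves a forest. *)
Lemma unicyclic_split (T : finType) (e : rel T) (v1 : T) :
  simple_graph e -> unicyclic e ->
  exists x y, [/\ x != y, x != v1, y != v1, e x y &
     acyclic (fun u v => e u v && ~~ same_pair x y u v)].
Proof.
move=> [hsym hirr] [_ [C [[c [hc _]] huni]]].
have [c0 [hc0 hv1]] : exists c0, is_graph_cycle e c0 /\ v1 \notin behead c0.
  case: (boolP (v1 \in c)) => hv; last first.
    by exists c; split=> //; apply: contra hv; case: c {hc} => //= z s; rewrite inE orbC => ->.
  case: (rot_to hv) => i s hrot; exists (v1 :: s); split.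
    by rewrite -hrot /is_graph_cycle rot_uniq size_rot rot_cycle.
  by move: hc; rewrite /is_graph_cycle -(rot_uniq i) hrot => /and3P[/= /andP[]].
case: c0 hc0 hv1 => [|z [|x [|y s]]] hc0 //; try by case/and3P: hc0.
rewrite /= !inE negb_or => /andP[hxv /norP[hyv _]].
have /and3P[/= /and3P[_ hx _] _ /and3P[_ exy _]] := hc0.
have hxy : x != y by move: hx; rewrite inE negb_or => /andP[].
exists x, y; split; rewrite ?(eq_sym _ v1) //.
apply: (acyclic_delete_edge hirr huni); rewrite -(huni _ hc0).
by apply/imsetP; exists (x, y); rewrite // rot1_cons /= !inE eqxx orbT.
Qed.


Lemma prod_set2 (R : comNzRingType) (T : finType) (X : T -> R) (u v : T) :
  u != v -> \prod_(x in [set u; v]) X x = X u * X v.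
Proof. by move=> huv; rewrite big_setU1 /= ?big_set1 // in_set1. Qed.

Lemma edge_sum_prod_eq (R : comNzRingType) (T : finType) (e : rel T) (X Y : T -> R) :
  irreflexive e -> (forall u v, X u * X v = Y u * Y v) -> edge_sum e X = edge_sum e Y.
Proof.
move=> hirr hXY; apply: eq_bigr => E /imsetP[[u v]]; rewrite inE /= => huv ->.
have hne : u != v by apply: contraTneq huv => ->; rewrite hirr.
by rewrite !prod_set2 // hXY.
Qed.

(* Double counting: each edge uv is seen as the two ordered pairs (u, v), (v, u). *)
Lemma edge_sum_pairs (R : comNzRingType) (T : finType) (e : rel T) (X : T -> R) :
  simple_graph e ->
  edge_sum e X *+ 2 = \sum_u \sum_v (if e u v then X u * X v else 0).
Proof.
move=> [hsym hirr].
rewrite pair_bigA /= -big_mkcond /=.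
set A := [set p : T * T | e p.1 p.2].
have -> : \sum_(p | e p.1 p.2) X p.1 * X p.2 = \sum_(p in A) X p.1 * X p.2.
  by apply: eq_bigl => p; rewrite inE.
rewrite (partition_big_imset (fun p : T * T => [set p.1; p.2])) /=.
rewrite /edge_sum -sumrMnl; apply: eq_bigr => E /imsetP[[u v] /=].
rewrite inE /= => huv ->.
have hne : u != v by apply: contraTneq huv => ->; rewrite hirr.
rewrite prod_set2 // (bigD1 (u, v)) /=; last by rewrite inE huv eqxx.
rewrite (bigD1 (v, u)) /=; last first.
  rewrite inE hsym huv /=; apply/andP; split; first by apply/eqP/setP => z; rewrite !inE orbC.
  by apply: contraNneq hne => -[->].
rewrite big1 ?addr0 ?mulr2n 1?mulrC // => [[u' v']] /= /andP[/andP[/andP[]]].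
rewrite inE /= => he /eqP hE hn1 hn2.
have hne' : u' != v' by apply: contraTneq he => ->; rewrite hirr.
case/orP: (set2_same_pair hne' hE) => /andP[/eqP E1 /eqP E2]; subst.
  - by rewrite eqxx in hn1.
  - by rewrite eqxx in hn2.
Qed.

Lemma sum_delta2 (R : comNzRingType) (T : finType) (F : T -> T -> R) (x y : T) :
  \sum_u \sum_v (if (u == x) && (v == y) then F u v else 0) = F x y.
Proof.
rewrite (bigD1 x) //= [X in _ + X]big1 ?addr0; last first.
  by move=> u hu; apply: big1 => v _; rewrite (negbTE hu).
rewrite (bigD1 y) //= !eqxx /= [X in _ + X]big1 ?addr0 // => v hv.
by rewrite (negbTE hv).
Qed.

Lemma same_pair_sum (R : comNzRingType) (T : finType) (F : T -> T -> R) (x y : T) :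
  x != y -> \sum_u \sum_v (if same_pair x y u v then F u v else 0) = F x y + F y x.
Proof.
move=> hxy; rewrite -(sum_delta2 F x y) -(sum_delta2 F y x) -big_split /=.
apply: eq_bigr => u _; rewrite -big_split /=; apply: eq_bigr => v _.
rewrite /same_pair; case: (eqVneq u x) => [->|hux] /=; last by rewrite add0r.
case: (eqVneq v y) => [->|hvy] /=; last by rewrite add0r.
by rewrite (negbTE hxy) addr0.
Qed.

Lemma edge_sum_delete (R : comNzRingType) (T : finType) (e : rel T) (a : T -> R) x y :
  simple_graph e -> x != y -> e x y ->
  edge_sum e a *+ 2 =
  adj_sum (fun u v => e u v && ~~ same_pair x y u v) a setT + (a x * a y) *+ 2.
Proof.
move=> he hxy exy; have [hsym _] := he.
have on_e : forall u v, same_pair x y u v -> e u v.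
  by move=> u v /orP[] /andP[/eqP -> /eqP ->]; rewrite // hsym.
rewrite edge_sum_pairs // mulr2n -{2}[a x * a y]mulrC.
rewrite -(same_pair_sum (fun u v => a u * a v) hxy) adj_sum_setT.
rewrite -big_split /=; apply: eq_bigr => u _; rewrite -big_split /=; apply: eq_bigr => v _.
case: (boolP (same_pair x y u v)) => hf /=; first by rewrite on_e // andbF add0r.
by rewrite andbT addr0.
Qed.

Lemma star_plus_edge (T : finType) (e : rel T) (v1 x y : T) :
  simple_graph e -> e x y ->
  star_on (fun u v => e u v && ~~ same_pair x y u v) v1 setT ->
  forall u v, e u v = (u != v) && [|| u == v1, v == v1 | same_pair x y u v].
Proof.
move=> [hsym hirr] exy [hcentre hedges] u v; apply/idP/idP.
- move=> huv; have -> /= : u != v by apply: contraTneq huv => ->; rewrite hirr.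
  case: (boolP (same_pair x y u v)) => hf; first by rewrite !orbT.
  by rewrite orbF; apply: hedges; rewrite ?in_setT // huv hf.
- case/andP=> huv /or3P[/eqP E | /eqP E | /orP[] /andP[/eqP -> /eqP ->]] //;
    last by rewrite hsym.
  + by subst u; rewrite eq_sym in huv; have /andP[] := hcentre v (in_setT v) huv; rewrite hsym.
  + by subst v; have /andP[] := hcentre u (in_setT u) huv.
Qed.

(* Three distinct vertices can be sent to 0, 1 and 2 by a bijection onto
   'I_#|T|: correct the enumeration rank by three transpositions. *)
Lemma ord_labelling (T : finType) (v1 x y : T) :
  (3 <= #|T|)%N -> x != y -> x != v1 -> y != v1 ->
  exists g : T -> 'I_#|T|,
    [/\ bijective g, g v1 = 0%N :> nat, g x = 1%N :> nat & g y = 2%N :> nat].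
Proof.
move=> hn hxy hxv hyv.
have [h0 h1] : (0 < #|T|)%N /\ (1 < #|T|)%N by lia.
pose o0 : 'I_#|T| := Ordinal h0; pose o1 : 'I_#|T| := Ordinal h1.
pose o2 : 'I_#|T| := Ordinal hn.
pose s1 := tperm (enum_rank v1) o0.
pose s2 := tperm (s1 (enum_rank x)) o1.
pose r12 t := s2 (s1 (enum_rank t)).
pose g t := tperm (r12 y) o2 (r12 t).
have r12_inj : injective r12 by move=> a b /perm_inj/perm_inj/enum_rank_inj.
have r12x : r12 x = o1 by rewrite /r12 /s2 tpermL.
have r12v1 : r12 v1 = o0.
  rewrite /r12 /s1 tpermL /s2 tpermD //.
  by rewrite -[o0 in _ != o0](tpermL (enum_rank v1) o0) (inj_eq perm_inj) (inj_eq enum_rank_inj).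
have g_inj : injective g by move=> a b /perm_inj/r12_inj.
exists g; split.
- by apply: (@inj_card_bij _ _ g g_inj); rewrite card_ord.
- by rewrite /g r12v1 tpermD // -r12v1 (inj_eq r12_inj).
- by rewrite /g r12x tpermD // -r12x (inj_eq r12_inj) eq_sym.
- by rewrite /g tpermL.
Qed.

Lemma star_plus_edge_iso (T : finType) (e : rel T) (v1 x y : T) :
  (3 <= #|T|)%N -> x != y -> x != v1 -> y != v1 ->
  (forall u v, e u v = (u != v) && [|| u == v1, v == v1 | same_pair x y u v]) ->
  iso_Sn3_centered e v1.
Proof.
move=> hn hxy hxv hyv he.
have [g [g_bij g0 g1 g2]] := ord_labelling hn hxy hxv hyv.
have g_inj := bij_inj g_bij.
have label t z k : nat_of_ord (g z) = k -> (nat_of_ord (g t) == k) = (t == z).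
  by move=> <-; rewrite (inj_eq val_inj) (inj_eq g_inj).
exists g; split=> //; split=> // u v.
by rewrite he /Sn3 (inj_eq g_inj) /same_pair !(label _ _ _ g0) !(label _ _ _ g1) !(label _ _ _ g2).
Qed.

Lemma const_sign_prod (R : realDomainType) (T : Type) (X : T -> R) :
  (forall v, 0 <= X v) \/ (forall v, X v <= 0) ->
  forall u v, X u * X v = `|X u| * `|X v|.
Proof. by case=> hX u v; [rewrite !ger0_norm | rewrite !ler0_norm ?mulrNN]. Qed.

Lemma sorted_head_max (R : realDomainType) (T : eqType) (a : T -> R) v s :
  sorted (fun u w => a w <= a u) (v :: s) -> forall w, w \in v :: s -> a w <= a v.
Proof.
move=> hs w; rewrite inE => /predU1P[-> // | hw].
have htr : transitive (fun u w => a w <= a u) by move=> ? ? ? h1 h2; exact: le_trans h2 h1.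
exact: (allP (order_path_min htr hs)).
Qed.

Lemma sum_enum_tail (R : comNzRingType) (T : finType) (F : T -> R) v l :
  perm_eq (v :: l) (enum T) -> \sum_(u <- l) F u = \sum_(u | u != v) F u.
Proof.
move=> hp; have : \sum_(u <- v :: l) F u = \sum_u F u by rewrite (perm_big _ hp) big_enum.
by rewrite big_cons (bigD1 v) //= => /addrI.
Qed.

Section DeletedCycleEdge.
Variables (R : realDomainType) (T : finType) (e : rel T) (a : T -> R).
Variables (v1 v2 v3 : T) (rest : seq T) (x y : T).
Hypotheses (e_simple : simple_graph e) (a_ge0 : forall w, 0 <= a w).
Hypotheses (a_perm : perm_eq [:: v1, v2, v3 & rest] (enum T))
  (a_sorted : sorted (fun u w => a w <= a u) [:: v1, v2, v3 & rest]).
Hypotheses (xy_neq : x != y) (x_neq : x != v1) (y_neq : y != v1) (exy : e x y).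
Hypothesis forest : acyclic (fun u v => e u v && ~~ same_pair x y u v).

Local Notation F := (fun u v => e u v && ~~ same_pair x y u v).

Lemma F_sym : symmetric F.
Proof. by case: e_simple => hsym _ u v; rewrite hsym same_pairC. Qed.

Lemma F_irr : irreflexive F.
Proof. by case: e_simple => _ hirr u; rewrite hirr. Qed.

Lemma top_weights :
  [/\ forall w, a w <= a v1, forall w, w != v1 -> a w <= a v2 &
      forall w, w != v1 -> w != v2 -> a w <= a v3].
Proof.
have hall w : w \in [:: v1, v2, v3 & rest] by rewrite (perm_mem a_perm) mem_enum.
have mem2 w : w != v1 -> w \in [:: v2, v3 & rest].
  by case/predU1P: (hall w) => [-> | //]; rewrite eqxx.
have mem3 w : w != v1 -> w != v2 -> w \in v3 :: rest.
  by move=> /mem2 /predU1P[-> | //]; rewrite eqxx.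
have s2 := path_sorted a_sorted; have s3 := path_sorted s2.
split=> [w | w h1 | w h1 h2].
- exact: sorted_head_max a_sorted _ (hall w).
- exact: sorted_head_max s2 _ (mem2 w h1).
- exact: sorted_head_max s3 _ (mem3 w h1 h2).
Qed.

Lemma cycle_edge_weight : a x * a y <= a v2 * a v3.
Proof.
have [_ le2 le3] := top_weights.
case: (eqVneq x v2) => [hx2 | hx2].
  by rewrite hx2; apply: ler_wpM2l => //; apply: le3; rewrite // -hx2 eq_sym.
case: (eqVneq y v2) => [hy2 | hy2].
  by rewrite hy2 mulrC; apply: ler_wpM2l => //; apply: le3; rewrite // -hy2.
have h32 : a v3 <= a v2 by case/and3P: a_sorted.
have := le3 x x_neq hx2; have := le3 y y_neq hy2; have := a_ge0 x; have := a_ge0 y.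
nra.
Qed.

Lemma edge_sum_le_star : edge_sum e a <= a v1 * rest_sum a v1 setT + a v2 * a v3.
Proof.
have [le1 _ _] := top_weights.
have := edge_sum_delete a e_simple xy_neq exy.
have := forest_bound F_sym F_irr forest a_ge0 le1 setT.
have := cycle_edge_weight; rewrite !mulr2n; lra.
Qed.

Lemma edge_sum_eq_star : (3 <= #|T|)%N -> (forall w, 0 < a w) -> a v2 < a v1 ->
  edge_sum e a = a v1 * rest_sum a v1 setT + a v2 * a v3 -> iso_Sn3_centered e v1.
Proof.
move=> hn a_gt0 hlt heq.
have [le1 le2 _] := top_weights.
have lt1 w : w != v1 -> a w < a v1 by move=> /le2 /le_lt_trans; apply.
have hadj : adj_sum F a setT = (a v1 * rest_sum a v1 setT) *+ 2.
  have := edge_sum_delete a e_simple xy_neq exy.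
  have := forest_bound F_sym F_irr forest a_ge0 le1 setT.
  have := cycle_edge_weight; move: heq; rewrite !mulr2n; lra.
have hstar := forest_bound_eq F_sym F_irr forest a_ge0 le1 a_gt0 lt1 hadj.
exact: star_plus_edge_iso hn xy_neq x_neq y_neq (star_plus_edge e_simple exy hstar).
Qed.

End DeletedCycleEdge.

Unset Implicit Arguments.

Theorem lemma3p2 (R : realFieldType) (T : finType) (e : rel T)
    (X : T -> R) (v1 v2 v3 : T) (rest : seq T) :
  simple_graph e -> unicyclic e -> (3 <= #|T|)%N ->
  ((forall v, 0 <= X v) \/ (forall v, X v <= 0)) ->
  perm_eq [:: v1, v2, v3 & rest] (enum T) ->
  sorted (fun u w => `|X w| <= `|X u|) [:: v1, v2, v3 & rest] ->
  edge_sum e X <= \sum_(u <- [:: v2, v3 & rest]) X v1 * X u + X v2 * X v3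
  /\
  (((forall v, 0 < X v) \/ (forall v, X v < 0)) ->
   `|X v2| < `|X v1| ->
   edge_sum e X = \sum_(u <- [:: v2, v3 & rest]) X v1 * X u + X v2 * X v3 ->
   iso_Sn3_centered e v1).
Proof.
move=> e_simple e_unicyclic hn hsign hperm hsorted.
pose a v := `|X v|.
have hprod : forall u v, X u * X v = a u * a v := const_sign_prod hsign.
have a_ge0 w : 0 <= a w by exact: normr_ge0.
have -> : edge_sum e X = edge_sum e a := edge_sum_prod_eq e_simple.2 hprod.
have -> : \sum_(u <- [:: v2, v3 & rest]) X v1 * X u = a v1 * rest_sum a v1 setT.
  rewrite (sum_enum_tail _ hperm) /rest_sum mulr_sumr.
  by apply: eq_big => [w | w _]; [rewrite in_setT | exact: hprod].
rewrite hprod.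
have [x [y [hxy hxv hyv exy hforest]]] := unicyclic_split v1 e_simple e_unicyclic.
split; first exact: (edge_sum_le_star e_simple a_ge0 hperm hsorted hxy hxv hyv exy hforest).
move=> hstrict hlt.
apply: (edge_sum_eq_star e_simple a_ge0 hperm hsorted hxy hxv hyv exy hforest hn) => // w.
by rewrite normr_gt0; case: hstrict => h; [exact: lt0r_neq0 | exact: ltr0_neq0].
Qed.
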